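(* Let $p$ be a prime, $q=p^r$, $\mathscr{C}\subseteq\mathbb{F}_q^n$ a linear code over $\mathbb{F}_q$ of dimension $k$ with $1\le k<n$, and $\mathscr{D}=\{(\lambda,\ldots,\lambda):\lambda\in\mathbb{F}_{q^k}\}\subset\mathbb{F}_{q^k}^m$ ($m\ge2$). Let $f_1,\ldots,f_{q^k}:\mathscr{C}\to\mathbb{F}_p$ be functions such that the $q^k\times q^k$ matrix $H=[\zeta^{f_j(\mathbf{c})}]_{1\le j\le q^k,\ \mathbf{c}\in\mathscr{C}}$ is a normalized $\mathrm{BH}(q^k,p)$ matrix, i.e. $HH^\dagger=q^kI$, $f_1\equiv0$ and $f_j(\mathbf{0})=0$ for all $j$. Put $\phi_j=q^{-k/2}\sum_{\mathbf{c}\in\mathscr{C}}\zeta^{f_j(\mathbf{c})}|\mathbf{c}\rangle$ and $Q=\operatorname{span}\{\phi_j^{\otimes m}:1\le j\le q^k\}\subseteq(\mathbb{C}^q)^{\otimes nm}$. If $Q$ is a stabilizer code, then $H$ is equivalent to the $rk$-fold Kronecker product of the Fourier matrix $[\zeta^{(a-1)(b-1)}]_{a,b=1}^p$ of order $p$.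
   Context: $\zeta=e^{2\pi i/p}$; $\operatorname{tr}:\mathbb{F}_q\to\mathbb{F}_p$ is the trace; $\mathbf{u}.\mathbf{v}=\sum_iu_iv_i$. Qudits: $(\mathbb{C}^q)^{\otimes N}$ has orthonormal basis $|\mathbf{x}\rangle$, $\mathbf{x}\in\mathbb{F}_q^N$. $X(a)|x\rangle=|x+a\rangle$, $Z(b)|x\rangle=\zeta^{\operatorname{tr}(bx)}|x\rangle$, extended to $X(\mathbf{a}),Z(\mathbf{b})$ on $(\mathbb{C}^q)^{\otimes N}$ by tensor products. Error group $\mathcal{P}_N=\{\omega^cX(\mathbf{a})Z(\mathbf{b}):\mathbf{a},\mathbf{b}\in\mathbb{F}_q^N\}$ with $\omega=\zeta,c\in\mathbb{F}_p$ for odd $p$ and $\omega=i$, $c\in\{0,1,2,3\}$ for $p=2$. For a subspace $Q$, $\operatorname{Stab}(Q)=\{E\in\mathcal{P}_N:Ev=v\ \forall v\in Q\}$, and $Q$ is a stabilizer code if $Q=\{v:Ev=v\ \forall E\in\operatorname{Stab}(Q)\}$. A $\mathrm{BH}(N,p)$ matrix is an $N\times N$ matrix with entries $p$-th roots of unity and $HH^\dagger=NI$; two such matrices are equivalent if one is obtained from the other by permuting rows and columns and multiplying rows and columns by $p$-th roots of unity. *)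

From HB Require Import structures.
From mathcomp Require Import all_boot all_order all_algebra all_field.
From mathcomp Require Import mxtens.
Unset Printing Implicit Defensive.
Import Order.TTheory GRing.Theory Num.Theory.
Local Open Scope ring_scope.

(* zeta = e^{2 pi i/p} : p.-root(-1) has the minimal argument pi/p. *)
Definition zeta (p : nat) : algC := (p.-root (-1)) ^+ 2.

Definition omega (p : nat) : algC := if p == 2%N then 'i else zeta p.
Definition pauli_ord (p : nat) : nat := if p == 2%N then 4%N else p.

(* absolute trace F_q -> F_p (q = p^r), as an element of F ... *)
Definition trF {F : finFieldType} (p r : nat) (x : F) : F :=
  \sum_(i < r) x ^+ (p ^ i).
(* ... and its representative in {0,..,p-1} (the element t of F_p = prime subfield) *)
Definition trN {F : finFieldType} (p r : nat) (x : F) : nat :=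
  oapp (fun i : 'I_p => nat_of_ord i) 0%N [pick i : 'I_p | (i%:R : F) == trF p r x].

(* States of qudits indexed by a finite type I: functions on the basis {ffun I -> F}. *)
Definition qstate (F : finFieldType) (I : finType) := {ffun I -> F} -> algC.

(* The error operator omega^c X(a) Z(b):  X(a)Z(b)|x> = zeta^{tr(b.x)} |x+a>. *)
Definition pauli {F : finFieldType} (p r : nat) {I : finType}
  (c : nat) (a b : {ffun I -> F}) (v : qstate F I) : qstate F I :=
  fun y => omega p ^+ c * zeta p ^+ trN p r (\sum_i b i * (y i - a i))
           * v [ffun i => y i - a i].

Definition in_stab {F : finFieldType} (p r : nat) {I : finType}
  (Q : qstate F I -> Prop) (c : 'I_(pauli_ord p)) (a b : {ffun I -> F}) : Prop :=
  forall v, Q v -> pauli p r c a b v = v.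

Definition is_stabilizer_code {F : finFieldType} (p r : nat) {I : finType}
  (Q : qstate F I -> Prop) : Prop :=
  forall v, Q v <-> (forall c a b, in_stab p r Q c a b -> pauli p r c a b v = v).

Definition in_span {F : finFieldType} {I : finType} {K : nat}
  (Phi : 'I_K -> qstate F I) (v : qstate F I) : Prop :=
  exists alpha : 'I_K -> algC, v = fun x => \sum_(j < K) alpha j * Phi j x.

Definition is_BH (N p : nat) (H : 'M[algC]_N) : Prop :=
  (forall i j, H i j ^+ p = 1) /\ H *m (map_mx (fun z : algC => z^*) H)^T = (N%:R)%:M.

Definition bh_equiv (p : nat) {N1 N2 : nat} (A : 'M[algC]_N1) (B : 'M[algC]_N2) : Prop :=
  exists (s t : 'I_N1 -> 'I_N2) (u v : 'I_N1 -> algC),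
    [/\ bijective s, bijective t, (forall i, u i ^+ p = 1), (forall j, v j ^+ p = 1)
      & forall i j, A i j = u i * v j * B (s i) (t j)].

Definition fourier (p : nat) : 'M[algC]_p := \matrix_(a < p, b < p) zeta p ^+ (a * b).

(* the l-th codeword in a fixed enumeration of C (columns of H) *)
Definition cw {F : finFieldType} {n : nat} (C : {vspace 'rV[F]_n}) (l : nat) : 'rV[F]_n :=
  nth 0 (enum [set x : 'rV[F]_n | x \in C]) l.

Definition Hmat {F : finFieldType} {p n N : nat} (C : {vspace 'rV[F]_n})
  (f : 'I_N -> 'rV[F]_n -> 'I_p) : 'M[algC]_N :=
  \matrix_(j < N, l < N) zeta p ^+ f j (cw C l).

(* phi_j = q^{-k/2} sum_{c in C} zeta^{f_j(c)} |c>, with q^k = N *)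
Definition phi {F : finFieldType} {p n N : nat} (C : {vspace 'rV[F]_n})
  (f : 'I_N -> 'rV[F]_n -> 'I_p) (j : 'I_N) (y : 'rV[F]_n) : algC :=
  if y \in C then (sqrtC N%:R)^-1 * zeta p ^+ f j y else 0.

(* phi_j^{(x) m} on nm qudits indexed by 'I_m * 'I_n (copy i, position l) *)
Definition phi_tens {F : finFieldType} {p n N : nat} (m : nat) (C : {vspace 'rV[F]_n})
  (f : 'I_N -> 'rV[F]_n -> 'I_p) (j : 'I_N) : qstate F ('I_m * 'I_n)%type :=
  fun x => \prod_(i < m) phi C f j (\row_(l < n) x (i, l)).

From HB Require Import structures.
From mathcomp Require Import all_boot all_order all_algebra all_field.
From mathcomp Require Import mxtens.
From Stdlib Require Import FunctionalExtensionality.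
Import Order.TTheory GRing.Theory Num.Theory.
Local Open Scope ring_scope.

(* Since f_1 vanishes on the code, phi_j^(x)m = phi_1^(x)m * rho_j for a pure phase rho_j.
   An error operator is a translation followed by a phase, so if it fixes phi_1^(x)m,
   phi_1^(x)m rho_j and phi_1^(x)m rho_l it also fixes phi_1^(x)m rho_j rho_l, which
   therefore lies in the stabilizer code Q. Evaluating on basis vectors whose m copies are
   (c, c', 0, ..., 0) and using the invertibility of H shows that the entrywise product of
   two rows of H is again a row. Hence the exponent vectors of the rows form an additive
   group, i.e. an F_p-subspace V of dimension rk; indexing rows by coordinates in a basis
   of V and columns by the values of that basis identifies H with the character table of
   F_p^(rk), which is the rk-th tensor power of the Fourier matrix. *)

Lemma zeta_expp p : (0 < p)%N -> zeta p ^+ p = 1.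
Proof.
move=> p_gt0; rewrite /zeta -exprM mulnC exprM rootCK //.
by rewrite expr2 mulN1r opprK.
Qed.

Lemma zeta_neq0 p : (0 < p)%N -> zeta p != 0.
Proof.
move=> p_gt0; apply/eqP => zeta0; move: (zeta_expp _ p_gt0).
by rewrite zeta0 expr0n gtn_eqF // => /eqP; rewrite eq_sym oner_eq0.
Qed.

Lemma zeta_prim_root p : prime p -> zeta p != 1 -> p.-primitive_root (zeta p).
Proof.
move=> p_pr zeta_neq1; have p_gt0 := prime_gt0 p_pr.
have [d d_prim d_dvd] := prim_order_exists p_gt0 (zeta_expp _ p_gt0).
case/primeP: p_pr => _ /(_ d d_dvd) /pred2P[d1 | dp]; last by rewrite dp in d_prim.
by move: d_prim; rewrite d1 => /prim_expr_order; rewrite expr1 => /eqP; rewrite (negbTE zeta_neq1).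
Qed.

Section ZetaFp.

Context {p : nat} (p_pr : prime p).

Lemma Fp_natE (x : 'F_p) : x = (x : nat)%:R.
Proof. by apply: val_inj; rewrite /= val_Fp_nat // modn_small // -[X in (_ < X)%N]Fp_cast. Qed.

Lemma zeta_exp_Fp_nat n : zeta p ^+ (n%:R : 'F_p) = zeta p ^+ n.
Proof. by rewrite val_Fp_nat // expr_mod // zeta_expp // prime_gt0. Qed.

Lemma zeta_exp_FpD (x y : 'F_p) : zeta p ^+ (x + y)%R = zeta p ^+ x * zeta p ^+ y.
Proof.
have -> : x + y = ((x + y)%N)%:R :> 'F_p by rewrite natrD -!Fp_natE.
by rewrite zeta_exp_Fp_nat exprD.
Qed.

Lemma zeta_exp_Fp_inj : p.-primitive_root (zeta p) -> injective (fun x : 'F_p => zeta p ^+ x).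
Proof.
move=> prim x y /eqP; rewrite (eq_prim_root_expr prim) => /eqP xy.
by rewrite (Fp_natE x) (Fp_natE y) -Fp_nat_mod // xy Fp_nat_mod.
Qed.

End ZetaFp.

Section FpSpan.

Context {p : nat} (p_pr : prime p) (vT : vectType 'F_p).

Lemma Fp_addr_closed_span (s : seq vT) : s != [::] -> {in s &, forall x y, x + y \in s} ->
  forall x, x \in <<s>>%VS -> x \in s.
Proof.
move=> s_nil s_add; have mulSn_in x n : x \in s -> x *+ n.+1 \in s.
  by move=> xs; elim: n => // n IH; rewrite mulrS s_add.
have s0 : 0 \in s.
  case: s s_nil s_add mulSn_in => // x s _ _ /(_ x p.-1 (mem_head x s)).
  by rewrite prednK ?prime_gt0 // -scaler_nat pchar_Fp_0 // scale0r.
have mulrn_in x n : x \in s -> x *+ n \in s by case: n => // n; apply: mulSn_in.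
move=> x /(@coord_span _ _ _ (in_tuple s)) ->; apply: (big_ind (fun y => y \in s)) => // i _.
rewrite [coord _ _ _]Fp_natE // scaler_nat mulrn_in // mem_nth //.
Qed.

End FpSpan.

Section TensorPowerDigits.

Variables (R : comPzRingType) (p : nat) (A : 'M[R]_p).

Lemma ntensmx_rec_digitsE K : exists D : 'I_(p ^ K.+1) -> K.+1.-tuple 'I_p,
  bijective D /\ forall i j,
    ntensmx_rec A K i j = \prod_(l < K.+1) A (tnth (D i) l) (tnth (D j) l).
Proof.
elim: K => [|K [D [D_bij DE]]].
  exists (fun i : 'I_(p ^ 1) => [tuple (i : 'I_p)]); split; last first.
    by move=> i j; rewrite big_ord1 !tnth0.
  apply: inj_card_bij; last by rewrite card_tuple !card_ord.
  by move=> i j /(congr1 val) [].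
pose D' (i : 'I_(p * p ^ K.+1)) :=
  [tuple of (mxtens_unindex i).1 :: D (mxtens_unindex i).2].
exists D'; split.
  apply: inj_card_bij; last by rewrite card_tuple !card_ord.
  move=> i j eqD; apply: (can_inj (@mxtens_unindexK _ _)); apply: injective_projections.
    by have := congr1 (fun t => tnth t ord0) eqD; rewrite !tnth0.
  apply: (bij_inj D_bij); apply: eq_from_tnth => l.
  by have := congr1 (fun t => tnth t (lift ord0 l)) eqD; rewrite !tnthS.
move=> i j; rewrite /= mxE DE [RHS]big_ord_recl !tnth0.
by congr (_ * _); apply: eq_bigr => l _; rewrite !tnthS.
Qed.

Lemma ntensmx_digitsE K : exists D : 'I_(p ^ K) -> K.-tuple 'I_p,
  bijective D /\ forall i j,
    (A ^t K) i j = \prod_(l < K) A (tnth (D i) l) (tnth (D j) l).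
Proof.
case: K => [|K]; last exact: ntensmx_rec_digitsE.
exists (fun _ => [tuple]); split; last by move=> i j; rewrite big_ord0 [i]ord1 [j]ord1 mxE.
apply: inj_card_bij; last by rewrite card_tuple !card_ord.
by move=> i j _; rewrite [i]ord1 [j]ord1.
Qed.

End TensorPowerDigits.

Lemma fourier_ntensmxE p K : exists D : 'I_(p ^ K) -> K.-tuple 'I_p,
  bijective D /\ forall i j,
    (fourier p ^t K) i j = zeta p ^+ (\sum_(l < K) tnth (D i) l * tnth (D j) l).
Proof.
have [D [D_bij DE]] := ntensmx_digitsE _ _ (fourier p) K.
by exists D; split=> // i j; rewrite DE -prodrXr; apply: eq_bigr => l _; rewrite mxE.
Qed.

Definition zeta_mx p {m n} (A : 'M['F_p]_(m, n)) : 'M[algC]_(m, n) :=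
  \matrix_(i, j) zeta p ^+ A i j.

Section ZetaMatrix.

Context {p : nat} (p_pr : prime p).

Lemma zeta_exp_Fp_dot K (x y : 'I_K -> 'F_p) :
  zeta p ^+ (\sum_(k < K) x k * y k)%R = zeta p ^+ (\sum_(k < K) x k * y k)%N.
Proof.
rewrite -[RHS]zeta_exp_Fp_nat // natr_sum; congr (zeta p ^+ nat_of_ord _).
by apply: eq_bigr => k _; rewrite natrM -!Fp_natE.
Qed.

Lemma zeta_mx_row_inj {m n} (A : 'M['F_p]_(m, n)) :
  injective (fun i => row i (zeta_mx p A)) -> injective (fun i => row i A).
Proof.
move=> zrow_inj i i' rowAE; apply: zrow_inj; apply/rowP => j.
by have := congr1 (fun v : 'rV_n => v 0 j) rowAE; rewrite !mxE => ->.
Qed.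

Lemma zeta_mx_col_inj {m n} (A : 'M['F_p]_(m, n)) :
  injective (fun j => col j (zeta_mx p A)) -> injective (fun j => col j A).
Proof.
move=> zcol_inj j j' colAE; apply: zcol_inj; apply/colP => i.
by have := congr1 (fun v : 'cV_m => v i 0) colAE; rewrite !mxE => ->.
Qed.

Lemma zeta_mx_prim_root {m n} (A : 'M['F_p]_(m, n)) : (1 < m)%N ->
  injective (fun i => row i (zeta_mx p A)) -> p.-primitive_root (zeta p).
Proof.
move=> m_gt1 zrow_inj; apply: zeta_prim_root => //; apply/eqP => zeta1.
suff /(congr1 val) : Ordinal (ltnW m_gt1) = Ordinal m_gt1 by [].
by apply: zrow_inj; apply/rowP => j; rewrite !mxE zeta1 !expr1n.
Qed.

Lemma zeta_mx_row_add {m n} (A : 'M['F_p]_(m, n)) : p.-primitive_root (zeta p) ->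
  (forall i i', exists i'', forall j, zeta_mx p A i j * zeta_mx p A i' j = zeta_mx p A i'' j) ->
  forall i i', exists i'', row i A + row i' A = row i'' A.
Proof.
move=> prim mul_closed i i'; have [i'' mulE] := mul_closed i i'.
exists i''; apply/rowP => j; apply: (zeta_exp_Fp_inj p_pr prim).
by have := mulE j; rewrite !mxE zeta_exp_FpD.
Qed.

Section RowSpace.

Variables (N : nat) (A : 'M['F_p]_N).
Hypotheses (row_inj : injective (fun i => row i A))
  (row_add : forall i i', exists i'', row i A + row i' A = row i'' A).

Let V := <<codom (fun i => row i A)>>%VS.

Lemma dim_Fp_rowspace d : N = (p ^ d)%N -> \dim V = d.
Proof.
move=> Nd; have N_gt0 : (0 < N)%N by rewrite Nd expn_gt0 prime_gt0.
have V_rows x : (x \in V) = (x \in codom (fun i => row i A)).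
  apply/idP/idP => [|/memv_span //]; apply: Fp_addr_closed_span => //.
    by rewrite -size_eq0 size_codom card_ord -lt0n.
  move=> _ _ /codomP[i ->] /codomP[i' ->]; have [i'' ->] := row_add i i'.
  exact: codom_f.
have /eqP : #|V| = N.
  rewrite -[RHS]card_ord -(card_codom row_inj); apply: eq_card => x.
  exact: V_rows.
rewrite card_vspace card_Fp // => /eqP VN; apply/eqP.
by rewrite -(eqn_exp2l _ _ (prime_gt1 p_pr)) VN -Nd.
Qed.

End RowSpace.

Lemma zeta_mx_equiv_fourier N d (A : 'M['F_p]_N) : N = (p ^ d)%N ->
  injective (fun i => row i A) -> injective (fun j => col j A) ->
  (forall i i', exists i'', row i A + row i' A = row i'' A) ->
  bh_equiv p (zeta_mx p A) (fourier p ^t d).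
Proof.
move=> Nd row_inj col_inj row_add; set V := <<codom (fun i => row i A)>>%VS.
have dimV : \dim V = d by apply: dim_Fp_rowspace.
rewrite -dimV; have [D [[Dinv _ DinvK] DE]] := fourier_ntensmxE p (\dim V).
pose toI (x : 'F_p) : 'I_p := cast_ord (Fp_cast p_pr) x.
have toI_tuple_inj (u v : 'I_(\dim V) -> 'F_p) :
    [tuple toI (u k) | k < \dim V] = [tuple toI (v k) | k < \dim V] -> u =1 v.
  by move=> uv k; have := congr1 (fun t => val (tnth t k)) uv; rewrite !tnth_mktuple => /= /val_inj.
pose b := vbasis V.
have rowV i : row i A \in V by apply/memv_span/codom_f.
have A_coord i j : A i j = \sum_k coord b k (row i A) * b`_k 0 j.
  have := congr1 (fun v : 'rV_N => v 0 j) (coord_vbasis (rowV i)); rewrite mxE summxE => ->.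
  by apply: eq_bigr => k _; rewrite mxE.
have card_le : (#|'I_(p ^ \dim V)| <= #|'I_N|)%N by rewrite !card_ord dimV Nd.
exists (fun i => Dinv [tuple toI (coord b k (row i A)) | k < \dim V]).
exists (fun j => Dinv [tuple toI (b`_k 0 j) | k < \dim V]).
exists (fun=> 1), (fun=> 1); split=> [||_|_|i j]; rewrite ?expr1n //.
- apply: inj_card_bij card_le => i i' /(can_inj DinvK)/toI_tuple_inj coordE.
  apply: row_inj; rewrite (coord_vbasis (rowV i)) (coord_vbasis (rowV i')).
  by under eq_bigr => k _ do rewrite coordE.
- apply: inj_card_bij card_le => j j' /(can_inj DinvK)/toI_tuple_inj bE.
  apply: col_inj; apply/colP => i; rewrite !mxE !A_coord.
  by under eq_bigr => k _ do rewrite bE.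
rewrite !mxE !mul1r DE !DinvK A_coord zeta_exp_Fp_dot.
by congr (_ ^+ _); apply: eq_bigr => k _; rewrite !tnth_mktuple.
Qed.

End ZetaMatrix.

Section OrthogonalRows.

Context {N : nat} {H : 'M[algC]_N} (N_gt0 : (0 < N)%N)
  (HH : H *m (map_mx (fun z : algC => z^*) H)^T = N%:R%:M).

Let N_neq0 : N%:R != 0 :> algC. Proof. by rewrite pnatr_eq0 -lt0n. Qed.

Let H_mulV : H *m (N%:R^-1 *: (map_mx (fun z : algC => z^*) H)^T) = 1%:M.
Proof. by rewrite -scalemxAr HH scale_scalar_mx mulVf. Qed.

Lemma orth_unitmx : H \in unitmx.
Proof. exact: (mulmx1_unit H_mulV).1. Qed.

Lemma orth_row_inj : injective (fun j => row j H).
Proof.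
move=> j j' /rowP Hjj'; apply/eqP; apply: contraT => j_neq_j'.
have {}Hjj' l : H j l = H j' l by have := Hjj' l; rewrite !mxE.
have := congr1 (fun M : 'M_N => M j j') HH; rewrite !mxE (negbTE j_neq_j') mulr0n.
have := congr1 (fun M : 'M_N => M j' j') HH; rewrite !mxE eqxx mulr1n => diag.
under eq_bigr => l _ do rewrite Hjj'.
by rewrite diag => /eqP; rewrite (negbTE N_neq0).
Qed.

Lemma orth_trmx : H^T *m (map_mx (fun z : algC => z^*) H^T)^T = N%:R%:M.
Proof.
move/mulmx1C: H_mulV; rewrite -scalemxAl => /(congr1 ( *:%R N%:R)).
rewrite scalerKV // => HVH.
by rewrite map_trmx trmxK -[X in _ *m X]trmxK -trmx_mul HVH scale_scalar_mx mulr1 tr_scalar_mx.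
Qed.

End OrthogonalRows.

Lemma orth_col_inj {N} {H : 'M[algC]_N} : (0 < N)%N ->
  H *m (map_mx (fun z : algC => z^*) H)^T = N%:R%:M -> injective (fun l => col l H).
Proof.
move=> N_gt0 /(orth_trmx N_gt0)/(orth_row_inj N_gt0) rowT_inj l l' /(congr1 trmx).
by rewrite !tr_col => /rowT_inj.
Qed.

Section TensorSquareComb.

Context {R : fieldType} {N : nat}.

Lemma idempotent_weightsE {a : 'I_N -> R} {s} :
  (forall t u, a t * a u = a t *+ (t == u)) -> a s != 0 ->
  forall u, a u = (u == s)%:R.
Proof.
move=> a_idem as_neq0 u; have as1 : a s = 1.
  by apply: (mulIf as_neq0); rewrite a_idem eqxx mulr1n mul1r.
have [-> // | us] := eqVneq u s.
by have := a_idem s u; rewrite eq_sym (negbTE us) as1 mul1r.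
Qed.

Lemma tensor_square_comb_row {H : 'M[R]_N} {g : 'I_N -> R} (a : 'I_N -> R) (l0 : 'I_N) :
  H \in unitmx -> (forall t, H t l0 = 1) -> g l0 = 1 ->
  (forall c c', g c * g c' = \sum_t a t * (H t c * H t c')) ->
  exists s, forall c, g c = H s c.
Proof.
(* With g = a H, the hypothesis reads H^T a^T a H = H^T diag(a) H, so the weights a are
   orthogonal idempotents and g(l0) = 1 singles out one of them. *)
move=> H_unit H_l0 g_l0 g_sq.
pose av := \row_t a t; pose gv := \row_c g c.
have g_comb : gv = av *m H.
  apply/rowP => c; rewrite !mxE -[g c]mulr1 -g_l0 g_sq.
  by apply: eq_bigr => t _; rewrite H_l0 mulr1 mxE.
have gram : gv^T *m gv = H^T *m diag_mx av *m H.
  apply/matrixP => c c'; rewrite !mxE big_ord1 !mxE g_sq.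
  by apply: eq_bigr => t _; rewrite mul_mx_diag !mxE mulrCA mulrA.
have av_idem : av^T *m av = diag_mx av.
  move: gram; rewrite g_comb trmx_mul -!mulmxA => /(congr1 (mulmx (invmx H^T))).
  rewrite !mulKmx ?unitmx_tr // !mulmxA => /(congr1 (mulmx^~ (invmx H))).
  by rewrite !mulmxK.
have a_idem t u : a t * a u = a t *+ (t == u).
  by have := congr1 (fun M : 'M_N => M t u) av_idem; rewrite !mxE big_ord1 !mxE.
have [s as_neq0] : exists s, a s != 0.
  apply/existsP; apply: contraLR isT => /existsPn a0.
  have := congr1 (fun v : 'rV_N => v 0 l0) g_comb; rewrite !mxE g_l0 big1 => [/eqP|t _].
    by rewrite oner_eq0.
  by have := a0 t; rewrite negbK mxE => /eqP->; rewrite mul0r.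
exists s => c; have := congr1 (fun v : 'rV_N => v 0 c) g_comb; rewrite !mxE => ->.
rewrite (bigD1 s) //= big1 ?addr0 => [|t ts]; rewrite mxE (idempotent_weightsE a_idem as_neq0).
  by rewrite eqxx mul1r.
by rewrite (negbTE ts) mul0r.
Qed.

End TensorSquareComb.

Lemma stabilizer_code_mul {F : finFieldType} {p r : nat} {I : finType}
    {Q : qstate F I -> Prop} {v rho sigma : qstate F I} :
  is_stabilizer_code p r Q -> Q v -> Q (fun y => v y * rho y) -> Q (fun y => v y * sigma y) ->
  Q (fun y => v y * rho y * sigma y).
Proof.
(* E = lam(y) * translation; from E v = v and E (v sigma) = v sigma, the translation
   leaves sigma unchanged wherever v does not vanish. *)
move=> Q_stab Qv Qvrho Qvsigma; apply/Q_stab => c a b E_stab.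
apply: functional_extensionality => y; move: (equal_f (E_stab _ Qv) y).
move: (equal_f (E_stab _ Qvrho) y) (equal_f (E_stab _ Qvsigma) y); rewrite /pauli.
set y' := [ffun i => y i - a i]; set lam := omega p ^+ c * _ => Erho Esigma Ev.
have sigmaE : v y * sigma y' = v y * sigma y by rewrite -{1}Ev -mulrA Esigma.
by rewrite !mulrA -(mulrA lam) Erho mulrAC sigmaE mulrAC.
Qed.

Section CodewordStates.

Variables (F : finFieldType) (p n m N : nat) (C : {vspace 'rV[F]_n}).
Variable f : 'I_N -> 'rV[F]_n -> 'I_p.

Definition tens_phase (j : 'I_N) (x : {ffun 'I_m * 'I_n -> F}) : algC :=
  \prod_(i < m) zeta p ^+ f j (\row_l x (i, l)).

Lemma phi_tens_phaseE j0 : {in C, forall c, f j0 c = 0%N :> nat} ->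
  forall j x, phi_tens m C f j x = phi_tens m C f j0 x * tens_phase j x.
Proof.
move=> f_j0 j x; rewrite /phi_tens /tens_phase -big_split; apply: eq_bigr => i _.
by rewrite /phi; case: ifP => [/f_j0 f0 | _] /=; rewrite ?f0 ?expr0 ?mulr1 ?mul0r.
Qed.

Definition copies (w : 'I_m -> 'rV[F]_n) : {ffun 'I_m * 'I_n -> F} :=
  [ffun il => w il.1 0 il.2].

Lemma row_copies w i : \row_l copies w (i, l) = w i.
Proof. by apply/rowP => l; rewrite !mxE ffunE. Qed.

Lemma phi_tens_copies_neq0 w j : (0 < p)%N -> (0 < N)%N -> (forall i, w i \in C) ->
  phi_tens m C f j (copies w) != 0.
Proof.
move=> p_gt0 N_gt0 wC; apply/prodf_neq0 => i _; rewrite /phi row_copies wC.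
by rewrite mulf_neq0 ?(expf_neq0 _ (zeta_neq0 _ p_gt0)) // invr_eq0 sqrtC_eq0 pnatr_eq0 -lt0n.
Qed.

Definition pair_word (c c' : 'rV[F]_n) (i : 'I_m) : 'rV[F]_n :=
  if i == 0%N :> nat then c else if i == 1%N :> nat then c' else 0.

Lemma pair_word_mem c c' i : c \in C -> c' \in C -> pair_word c c' i \in C.
Proof. by rewrite /pair_word => cC c'C; case: ifP => // _; case: ifP => // _; apply: mem0v. Qed.

Lemma tens_phase_pair_word c c' j : (1 < m)%N -> f j 0 = 0%N :> nat ->
  tens_phase j (copies (pair_word c c')) = zeta p ^+ f j c * zeta p ^+ f j c'.
Proof.
move=> m_gt1 f_j0; rewrite /tens_phase (bigD1 (Ordinal (ltnW m_gt1))) //=.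
rewrite (bigD1 (Ordinal m_gt1)) //= big1 ?mulr1 => [|i /andP[/negPf i_neq1 /negPf i_neq0]].
  by rewrite !row_copies.
by rewrite row_copies /pair_word -!val_eqE /= in i_neq0 i_neq1 *; rewrite i_neq0 i_neq1 f_j0.
Qed.

Lemma cw_mem l : (l < #|C|)%N -> cw C l \in C.
Proof.
move=> l_lt; suff : cw C l \in enum [set x : 'rV[F]_n | x \in C] by rewrite mem_enum inE.
by apply: mem_nth; rewrite -cardE cardsE.
Qed.

Lemma cw_zero : exists2 l0, (l0 < #|C|)%N & cw C l0 = 0.
Proof.
have C0 : (0 : 'rV[F]_n) \in enum [set x : 'rV[F]_n | x \in C] by rewrite mem_enum inE mem0v.
exists (index 0 (enum [set x : 'rV[F]_n | x \in C])); last by rewrite /cw nth_index.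
by move: C0; rewrite -index_mem -cardE cardsE.
Qed.

Variables (r : nat) (j0 : 'I_N).
Hypotheses (p_gt0 : (0 < p)%N) (m_gt1 : (1 < m)%N) (C_card : #|C| = N).
Hypotheses (f_j0 : {in C, forall c, f j0 c = 0%N :> nat}) (f_at0 : forall j, f j 0 = 0%N :> nat).
Hypothesis Q_stab : is_stabilizer_code p r (in_span (phi_tens m C f)).

Lemma Hmat_mul_closed j l : Hmat C f \in unitmx ->
  exists t, forall c, Hmat C f j c * Hmat C f l c = Hmat C f t c.
Proof.
move=> H_unit; set psi := phi_tens m C f.
have psiE := phi_tens_phaseE _ f_j0.
have span_psi t : in_span psi (psi t).
  exists (fun u => (u == t)%:R); apply: functional_extensionality => x.
  by rewrite (bigD1 t) //= big1 ?addr0 ?eqxx ?mul1r // => u /negPf->; rewrite mul0r.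
have span_phase t : in_span psi (fun x => psi j0 x * tens_phase t x).
  by rewrite -(functional_extensionality _ _ (psiE t)).
have [al psi_jl] := stabilizer_code_mul Q_stab (span_psi j0) (span_phase j) (span_phase l).
have [l0 l0_lt cw_l0] := cw_zero; rewrite C_card in l0_lt.
have N_gt0 : (0 < N)%N := leq_ltn_trans (leq0n l0) l0_lt.
have HE t c : Hmat C f t c = zeta p ^+ f t (cw C c) by rewrite mxE.
apply: (tensor_square_comb_row al (Ordinal l0_lt) H_unit).
- by move=> t; rewrite HE cw_l0 f_at0.
- by rewrite !HE cw_l0 !f_at0 mulr1.
move=> c c'; pose x := copies (pair_word (cw C c) (cw C c')).
have cwC (u : 'I_N) : cw C u \in C by apply: cw_mem; rewrite C_card.
have psi_x_neq0 : psi j0 x != 0.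
  by apply: phi_tens_copies_neq0 => // i; apply: pair_word_mem.
have := equal_f psi_jl x; rewrite -mulrA.
under eq_bigr => t _ do rewrite psiE mulrCA.
rewrite -mulr_sumr => /(mulfI psi_x_neq0).
rewrite !tens_phase_pair_word // !HE mulrACA => ->.
by apply: eq_bigr => t _; rewrite tens_phase_pair_word // !HE.
Qed.

End CodewordStates.

Theorem theorem4p2 (p r : nat) (F : finFieldType) (n k m : nat)
  (C : {vspace 'rV[F]_n}) (f : 'I_((p ^ r) ^ k) -> 'rV[F]_n -> 'I_p) :
  prime p -> #|F| = (p ^ r)%N -> \dim C = k -> (1 <= k)%N -> (k < n)%N -> (2 <= m)%N ->
  is_BH ((p ^ r) ^ k)%N p (Hmat C f) ->
  (forall j : 'I_((p ^ r) ^ k), nat_of_ord j = 0%N ->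
     forall c, c \in C -> nat_of_ord (f j c) = 0%N) ->
  (forall j, nat_of_ord (f j 0) = 0%N) ->
  is_stabilizer_code p r (in_span (phi_tens m C f)) ->
  bh_equiv p (Hmat C f) (fourier p ^t (r * k)).
Proof.
(* Neither k < n nor the condition that the entries of H are p-th roots of unity is needed. *)
move=> p_pr F_card dimC k_gt0 _ m_gt1 [_ HH] f_j0 f_at0 Q_stab.
set N := ((p ^ r) ^ k)%N in f HH f_j0 f_at0 Q_stab *.
have C_card : #|C| = N by rewrite card_vspace F_card dimC.
have N_gt1 : (1 < N)%N.
  by rewrite /N -F_card; apply: leq_ltn_trans k_gt0 (ltn_expl _ (card_finNzRing_gt1 F)).
have N_gt0 := ltnW N_gt1.
have mul_closed j l : exists t, forall c, Hmat C f j c * Hmat C f l c = Hmat C f t c.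
  exact: (@Hmat_mul_closed F p n m N C f r (Ordinal N_gt0) (prime_gt0 p_pr) m_gt1 C_card
            (f_j0 (Ordinal N_gt0) erefl) f_at0 Q_stab j l (orth_unitmx N_gt0 HH)).
pose A : 'M['F_p]_N := \matrix_(j, l) (f j (cw C l) : nat)%:R.
have HA : Hmat C f = zeta_mx p A.
  by apply/matrixP => j l; rewrite !mxE zeta_exp_Fp_nat.
rewrite HA in HH mul_closed *.
have rowH_inj := orth_row_inj N_gt0 HH.
apply: zeta_mx_equiv_fourier => //; first by rewrite expnM.
- exact: zeta_mx_row_inj rowH_inj.
- exact: zeta_mx_col_inj (orth_col_inj N_gt0 HH).
exact: zeta_mx_row_add (zeta_mx_prim_root p_pr A N_gt1 rowH_inj) mul_closed.
Qed.
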